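(* Let $n\ge2$, $Q>0$ real, and let $P\in\mathrm{Mat}(n^2,\mathbb{C})$ be a nontrivial solution of rank $r$ to $$P^*=P,\quad P^2=P,\quad Q^2(P_1P_2P_1-P_2P_1P_2)=P_1-P_2,$$ where $P_1=P\otimes I_n$, $P_2=I_n\otimes P$. Let $K_P=P_1-P_2$ and $\lambda_\pm=\pm\sqrt{1-Q^{-2}}$. Then the eigenvalues $\lambda_+$ and $\lambda_-$ of $K_P$ have the same multiplicity $k$, and $$\frac{1}{2n}\,r(n^2-r)\le k\le \min(rn,\;n^3-rn).$$
   Context: $I_n$ is the $n\times n$ identity matrix and $\otimes$ is the Kronecker product. A solution is trivial if $P=0$ or $P=I_n\otimes I_n$, nontrivial otherwise. *)

From mathcomp Require Import all_boot all_order all_algebra.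
From mathcomp Require Import algC.
From mathcomp.real_closed Require Export mxtens.
Set Implicit Arguments. Unset Strict Implicit. Unset Printing Implicit Defensive.
Import Order.TTheory GRing.Theory Num.Theory.
Local Open Scope ring_scope.

Definition adjmx {m n : nat} (A : 'M[algC]_(m, n)) : 'M[algC]_(n, m) :=
  (map_mx (@Num.conj_op _) A)^T.

Definition eig_mult {N : nat} (A : 'M[algC]_N) (a : algC) : nat :=
  mup a (char_poly A).

From mathcomp Require Import all_boot all_order all_algebra.
From mathcomp Require Import algC ring spectral.
From mathcomp.real_closed Require Import mxtens.
Set Implicit Arguments. Unset Strict Implicit. Unset Printing Implicit Defensive.
Import Order.TTheory GRing.Theory Num.Theory.
Local Open Scope ring_scope.

(* The relation reads K^3 = lam^2 K with lam^2 = 1 - Q^-2,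
   so if lam^2 > 0 the Hermitian matrix K has its spectrum in {0, lam, -lam}.
   Since tr P1 = tr P2 = r n, tr K = 0 forces lam and -lam to have the same
   multiplicity k, and tr K^2 = 2 lam^2 k then gives
   tr (P1 P2) = r n - lam^2 k.
   Upper bounds: E = 1 - lam^-2 K^2 is the orthogonal projection onto ker K,
   and tr (P1 E) = r n - k, tr ((1 - P1) E) = n^3 - r n - k are traces of
   products of two orthogonal projections, hence nonnegative.
   Lower bound: tr (P1 P2) = tr (A B) for the two partial traces A, B of P,
   and the Hilbert-Schmidt positivity of (A - B)^2 and of
   n^2 P - n (B (x) 1) - n (1 (x) A) + r 1 gives 2 n tr (A B) <= n^2 r + r^2.
   When 1 - Q^-2 <= 0 the cubic relation forces K = 0, and the same inequality
   leaves only r = 0 and r = n^2, i.e. the trivial solutions. *)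

Section Adjoint.
Variables m n : nat.
Implicit Types A B : 'M[algC]_(m, n).

Lemma adjmxE A i j : adjmx A i j = (A j i)^*.
Proof. by rewrite !mxE. Qed.

Lemma adjmx_trC A : adjmx A = (A ^t*)%sesqui.
Proof. by rewrite /adjmx map_trmx. Qed.

Lemma adjmxD A B : adjmx (A + B) = adjmx A + adjmx B.
Proof. by apply/matrixP => i j; rewrite !mxE rmorphD. Qed.

Lemma adjmxN A : adjmx (- A) = - adjmx A.
Proof. by apply/matrixP => i j; rewrite !mxE rmorphN. Qed.

Lemma adjmxB A B : adjmx (A - B) = adjmx A - adjmx B.
Proof. by rewrite adjmxD adjmxN. Qed.

Lemma adjmxZ a A : adjmx (a *: A) = a^* *: adjmx A.
Proof. by apply/matrixP => i j; rewrite !mxE rmorphM. Qed.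

Lemma adjmxM p A (C : 'M[algC]_(n, p)) : adjmx (A *m C) = adjmx C *m adjmx A.
Proof. by rewrite /adjmx map_mxM trmx_mul. Qed.

Lemma adjmx_tens p q A (C : 'M[algC]_(p, q)) : adjmx (A *t C) = adjmx A *t adjmx C.
Proof. by rewrite /adjmx map_mxT trmx_tens. Qed.

End Adjoint.

Lemma adjmx1 n : adjmx (1%:M : 'M[algC]_n) = 1%:M.
Proof. by rewrite /adjmx map_mx1 trmx1. Qed.

Lemma adjmx_castmx m m' (e : m = m') (A : 'M[algC]_m) :
  adjmx (castmx (e, e) A) = castmx (e, e) (adjmx A).
Proof. by case: m' / e in A *. Qed.

Section TracePositivity.
Variables m n : nat.

Lemma mxtrace_mul_adj (A : 'M[algC]_(m, n)) :
  \tr (A *m adjmx A) = \sum_i \sum_j `|A i j| ^+ 2.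
Proof.
apply: eq_bigr => i _; rewrite mxE; apply: eq_bigr => j _.
by rewrite adjmxE normCK.
Qed.

Lemma mxtrace_mul_adj_ge0 (A : 'M[algC]_(m, n)) : 0 <= \tr (A *m adjmx A).
Proof.
by rewrite mxtrace_mul_adj sumr_ge0 // => i _; rewrite sumr_ge0 // => j _;
  rewrite exprn_ge0.
Qed.

Lemma mxtrace_mul_adj_eq0 (A : 'M[algC]_(m, n)) :
  (\tr (A *m adjmx A) == 0) = (A == 0).
Proof.
have sq_ge0 i j : 0 <= `|A i j| ^+ 2 by rewrite exprn_ge0.
rewrite mxtrace_mul_adj psumr_eq0 => [|i _]; last exact: sumr_ge0.
apply/allP/eqP => [A0 | -> i _]; last first.
  by rewrite big1 ?eqxx // => j _; rewrite mxE normr0 expr0n.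
apply/matrixP => i j; rewrite mxE; apply/eqP.
have /A0 := mem_index_enum i; rewrite psumr_eq0 // => /allP/(_ j (mem_index_enum j)).
by rewrite sqrf_eq0 normr_eq0.
Qed.

End TracePositivity.

Lemma herm_mxtrace_sqr_ge0 n (H : 'M[algC]_n) : adjmx H = H -> 0 <= \tr (H *m H).
Proof. by move=> hH; rewrite -{2}hH mxtrace_mul_adj_ge0. Qed.

Lemma herm_mxtrace_sqr_eq0 n (H : 'M[algC]_n) :
  adjmx H = H -> (\tr (H *m H) == 0) = (H == 0).
Proof. by move=> hH; rewrite -{2}hH mxtrace_mul_adj_eq0. Qed.

Lemma herm_mxtrace_mul_le n (A B : 'M[algC]_n) : adjmx A = A -> adjmx B = B ->
  2 * \tr (A *m B) <= \tr (A *m A) + \tr (B *m B).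
Proof.
move=> hA hB; have hAB : adjmx (A - B) = A - B by rewrite adjmxB hA hB.
rewrite -subr_ge0 (_ : _ - _ = \tr ((A - B) *m (A - B))).
  exact: herm_mxtrace_sqr_ge0.
by rewrite mulmxBl !mulmxBr !raddfB /= [\tr (B *m A)]mxtrace_mulC; ring.
Qed.

Lemma herm_cubic_le0 n (H : 'M[algC]_n) mu :
  adjmx H = H -> H *m H *m H = mu *: H -> mu <= 0 -> H = 0.
Proof.
move=> hH H3 mu_le0; have hH2 : adjmx (H *m H) = H *m H by rewrite adjmxM hH.
have : \tr ((H *m H) *m (H *m H)) == 0.
  rewrite eq_le herm_mxtrace_sqr_ge0 // andbT mulmxA H3 -scalemxAl mxtraceZ.
  by rewrite mulr_le0_ge0 // herm_mxtrace_sqr_ge0.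
rewrite herm_mxtrace_sqr_eq0 // => /eqP H2.
by apply/eqP; rewrite -herm_mxtrace_sqr_eq0 // H2 mxtrace0.
Qed.

Lemma mxtrace_proj_mul_ge0 n (H E : 'M[algC]_n) :
  adjmx H = H -> H *m H = H -> adjmx E = E -> E *m E = E ->
  0 <= \tr (H *m E).
Proof.
move=> hH iH hE iE.
have -> : \tr (H *m E) = \tr ((E *m H) *m adjmx (E *m H)).
  by rewrite adjmxM hH hE -mulmxA (mulmxA H) iH [RHS]mxtrace_mulC -mulmxA iE.
exact: mxtrace_mul_adj_ge0.
Qed.

Lemma mxtrace_idem (F : fieldType) n (A : 'M[F]_n) :
  A *m A = A -> \tr A = (\rank A)%:R.
Proof.
move=> AA; have CR := mulmx_base A.
have RC : row_base A *m col_base A = 1%:M.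
  apply: (row_free_inj (row_base_free A)); apply: (row_full_inj (col_base_full A)).
  by rewrite mul1mx mulmxA (mulmxA (col_base A)) CR -mulmxA CR AA.
have -> : \tr A = \tr (col_base A *m row_base A) by rewrite CR.
by rewrite mxtrace_mulC RC mxtrace1.
Qed.

Section Similarity.
Variables (F : fieldType) (n : nat) (V : 'M[F]_n).
Hypothesis V_unit : V \in unitmx.

Lemma char_poly_similar A : char_poly (invmx V *m A *m V) = char_poly A.
Proof.
pose Vp := map_mx (@polyC F) V; pose Vp' := map_mx (@polyC F) (invmx V).
have VpV : Vp' *m Vp = 1%:M by rewrite -map_mxM mulVmx // map_mx1.
rewrite /char_poly.
have -> : char_poly_mx (invmx V *m A *m V) = Vp' *m char_poly_mx A *m Vp.
  rewrite /char_poly_mx !map_mxM mulmxBr mulmxBl scalar_mxC.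
  by rewrite -(mulmxA _ Vp') VpV mulmx1.
by rewrite !det_mulmx mulrAC -det_mulmx VpV det1 mul1r.
Qed.

Lemma mxtrace_similar A : \tr (invmx V *m A *m V) = \tr A.
Proof. by rewrite mxtrace_mulC mulmxA mulmxV // mul1mx. Qed.

Lemma mulmx_similar A B :
  (invmx V *m A *m V) *m (invmx V *m B *m V) = invmx V *m (A *m B) *m V.
Proof. by rewrite !mulmxA mulmxK. Qed.

Lemma similar_inj : injective (fun A => invmx V *m A *m V).
Proof.
move=> A B /(congr1 (fun X => V *m X *m invmx V)).
by rewrite !mulmxA !mulmxV // !mul1mx !mulmxK.
Qed.

End Similarity.

Section Tensor.
Variable R : comPzRingType.

Lemma sumr_mul_eq (n : nat) (k : 'I_n) (F : 'I_n -> R) :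
  \sum_(l < n) F l * (l == k)%:R = F k.
Proof.
rewrite (bigD1 k) //= eqxx mulr1 big1 ?addr0 // => l /negbTE->.
by rewrite mulr0.
Qed.

Lemma sum_mxtens_index m n (F : 'I_(m * n) -> R) :
  \sum_x F x = \sum_(i < m) \sum_(j < n) F (mxtens_index (i, j)).
Proof.
rewrite pair_big /=; apply: reindex.
exists (@mxtens_unindex m n) => [[i j] _ | x _]; first by rewrite mxtens_indexK.
by rewrite -surjective_pairing mxtens_unindexK.
Qed.

Lemma mxtrace_mulmx_sum n (A B : 'M[R]_n) :
  \tr (A *m B) = \sum_i \sum_j A i j * B j i.
Proof. by apply: eq_bigr => i _; rewrite mxE. Qed.

Lemma mxtrace_tens m n (A : 'M[R]_m) (B : 'M[R]_n) :
  \tr (A *t B) = \tr A * \tr B.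
Proof. by rewrite /mxtrace mulr_sum; apply: eq_bigr => i _; rewrite mxE. Qed.

Lemma tens1mx1 m n : (1%:M : 'M[R]_m) *t (1%:M : 'M[R]_n) = 1%:M.
Proof.
apply/matrixP => i j.
case: (mxtens_indexP i) => i1 i2; case: (mxtens_indexP j) => j1 j2.
rewrite tensmxE !mxE -natrM (inj_eq (can_inj (@mxtens_indexK _ _))).
by rewrite xpair_eqE mulnb.
Qed.

Lemma mxtrace_castmx m m' (e : m = m') (A : 'M[R]_m) :
  \tr (castmx (e, e) A) = \tr A.
Proof. by case: m' / e in A *. Qed.

Lemma castmx_mulmx m m' (e : m = m') (A B : 'M[R]_m) :
  castmx (e, e) A *m castmx (e, e) B = castmx (e, e) (A *m B).
Proof. by case: m' / e in A B *. Qed.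

Section PartialTrace.
Variables m n : nat.
Implicit Type P : 'M[R]_(m * n).

Definition ptrace1 P : 'M[R]_n :=
  \matrix_(j, j') \sum_i P (mxtens_index (i, j)) (mxtens_index (i, j')).

Definition ptrace2 P : 'M[R]_m :=
  \matrix_(i, i') \sum_j P (mxtens_index (i, j)) (mxtens_index (i', j)).

Lemma mxtrace_ptrace1 P : \tr (ptrace1 P) = \tr P.
Proof.
rewrite [RHS]/mxtrace sum_mxtens_index exchange_big.
by apply: eq_bigr => j _; rewrite mxE.
Qed.

Lemma mxtrace_ptrace2 P : \tr (ptrace2 P) = \tr P.
Proof.
by rewrite [RHS]/mxtrace sum_mxtens_index; apply: eq_bigr => i _; rewrite mxE.
Qed.

Lemma mxtrace_mul_tens1mx P (Y : 'M[R]_n) :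
  \tr (P *m (1%:M *t Y)) = \tr (ptrace1 P *m Y).
Proof.
rewrite !mxtrace_mulmx_sum sum_mxtens_index exchange_big; apply: eq_bigr => j _.
transitivity (\sum_i \sum_j' \sum_i'
  P (mxtens_index (i, j)) (mxtens_index (i', j')) * Y j' j * (i' == i)%:R).
  apply: eq_bigr => i _; rewrite sum_mxtens_index exchange_big.
  by do 2!apply: eq_bigr => ? _; rewrite tensmxE !mxE mulrCA mulrC.
rewrite exchange_big; apply: eq_bigr => j' _; rewrite mxE mulr_suml.
by apply: eq_bigr => i _; rewrite sumr_mul_eq.
Qed.

Lemma mxtrace_mul_tensmx1 P (X : 'M[R]_m) :
  \tr (P *m (X *t 1%:M)) = \tr (ptrace2 P *m X).
Proof.
rewrite !mxtrace_mulmx_sum sum_mxtens_index; apply: eq_bigr => i _.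
transitivity (\sum_j \sum_i' \sum_j'
  P (mxtens_index (i, j)) (mxtens_index (i', j')) * X i' i * (j' == j)%:R).
  apply: eq_bigr => j _; rewrite sum_mxtens_index.
  by do 2!apply: eq_bigr => ? _; rewrite tensmxE !mxE mulrA.
rewrite exchange_big; apply: eq_bigr => i' _; rewrite mxE mulr_suml.
by apply: eq_bigr => j _; rewrite sumr_mul_eq.
Qed.

End PartialTrace.

Lemma cast_mxtens_index3 m n p (i : 'I_m) (j : 'I_n) (k : 'I_p) :
  cast_ord (esym (mulnA m n p)) (mxtens_index (mxtens_index (i, j), k)) =
  mxtens_index (i, mxtens_index (j, k)).
Proof. by apply: val_inj; rewrite /= mulnDl -mulnA addnA. Qed.

Lemma ptrace2_tens_castmx m n p (A : 'M[R]_m) (P : 'M[R]_(n * p)) :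
  ptrace2 (castmx (mulnA m n p, mulnA m n p) (A *t P)) = A *t ptrace2 P.
Proof.
apply/matrixP => x y.
case: (mxtens_indexP x) => i j; case: (mxtens_indexP y) => i' j'.
rewrite tensmxE !mxE mulr_sumr; apply: eq_bigr => k _.
by rewrite castmxE /= !cast_mxtens_index3 tensmxE.
Qed.

Lemma mxtrace_tens_shift n (P : 'M[R]_(n * n)) :
  \tr ((P *t 1%:M) *m castmx (mulnA n n n, mulnA n n n) (1%:M *t P)) =
  \tr (ptrace1 P *m ptrace2 P).
Proof.
rewrite mxtrace_mulC mxtrace_mul_tensmx1 ptrace2_tens_castmx mxtrace_mulC.
exact: mxtrace_mul_tens1mx.
Qed.

End Tensor.

Lemma adjmx_ptrace1 m n (P : 'M[algC]_(m * n)) :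
  adjmx (ptrace1 P) = ptrace1 (adjmx P).
Proof.
apply/matrixP => j j'; rewrite !mxE rmorph_sum.
by apply: eq_bigr => i _; rewrite !mxE.
Qed.

Lemma adjmx_ptrace2 m n (P : 'M[algC]_(m * n)) :
  adjmx (ptrace2 P) = ptrace2 (adjmx P).
Proof.
apply/matrixP => i i'; rewrite !mxE rmorph_sum.
by apply: eq_bigr => j _; rewrite !mxE.
Qed.

Lemma herm_cubic_spectrum n (K : 'M[algC]_n) (mu : algC) :
  adjmx K = K -> K *m K *m K = mu *: K ->
  exists s : seq algC,
    [/\ char_poly K = \prod_(x <- s) ('X - x%:P),
        all (fun x => x ^+ 3 == mu * x) s,
        \tr K = \sum_(x <- s) x & \tr (K *m K) = \sum_(x <- s) x ^+ 2].
Proof.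
move=> hK K3; have /orthomx_spectralP eK : K \is normalmx.
  by apply/normalmxP; rewrite -adjmx_trC hK.
set V := spectralmx K in eK; set d := spectral_diag K in eK.
have V_unit : V \in unitmx := spectral_unit K.
have D3 : diag_mx d *m diag_mx d *m diag_mx d = mu *: diag_mx d.
  apply: (similar_inj V_unit); rewrite /= -!mulmx_similar // -eK K3 {1}eK.
  by rewrite scalemxAl scalemxAr.
exists [seq d 0 i | i <- enum 'I_n]; rewrite enumT !big_map; split.
- rewrite eK char_poly_similar // char_poly_trig ?diag_mx_is_trig //.
  by apply: eq_bigr => i _; rewrite mxE eqxx.
- apply/allP => _ /mapP [i _ ->]; move/matrixP/(_ i i): D3.
  by rewrite !mulmx_diag !mxE eqxx mulr1n => <-; rewrite exprSr expr2.
- by rewrite eK mxtrace_similar // mxtrace_diag.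
- rewrite eK mulmx_similar // mxtrace_similar // mulmx_diag mxtrace_diag.
  by apply: eq_bigr => i _; rewrite mxE.
Qed.

Lemma sum_cubic_roots (s : seq algC) (lam : algC) : lam != 0 ->
  all (fun x => x ^+ 3 == lam ^+ 2 * x) s ->
  \sum_(x <- s) x = lam * ((count_mem lam s)%:R - (count_mem (- lam) s)%:R) /\
  \sum_(x <- s) x ^+ 2 = lam ^+ 2 * (count_mem lam s + count_mem (- lam) s)%:R.
Proof.
move=> lam_neq0; have lamN_neq0 : - lam != 0 by rewrite oppr_eq0.
have lam_neqN : (lam == - lam) = false.
  by apply/negbTE; rewrite -addr_eq0 -mulr2n mulrn_eq0 negb_or lam_neq0.
elim: s => [|x s IHs] /=; first by rewrite !big_nil subrr !mulr0.
case/andP => x3 /IHs [sum1 sum2]; rewrite !big_cons sum1 sum2 !natrD.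
have : x * (x - lam) * (x + lam) == 0.
  by rewrite (_ : _ * _ = x ^+ 3 - lam ^+ 2 * x) ?subr_eq0 //; ring.
rewrite !mulf_eq0 subr_eq0 addr_eq0 -orbA => /or3P[] /eqP->.
- rewrite !(eq_sym 0) (negbTE lam_neq0) (negbTE lamN_neq0) /=.
  by split; ring.
- by rewrite eqxx lam_neqN /=; split; ring.
- by rewrite eqxx eq_sym lam_neqN /=; split; ring.
Qed.

Lemma herm_cubic_traces n (K : 'M[algC]_n) (lam : algC) :
  adjmx K = K -> lam != 0 -> K *m K *m K = lam ^+ 2 *: K ->
  \tr K = lam * ((eig_mult K lam)%:R - (eig_mult K (- lam))%:R) /\
  \tr (K *m K) = lam ^+ 2 * (eig_mult K lam + eig_mult K (- lam))%:R.
Proof.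
move=> hK lam_neq0 K3; have [s [charK s3 -> ->]] := herm_cubic_spectrum hK K3.
by rewrite /eig_mult charK !mu_prod_XsubC; apply: sum_cubic_roots.
Qed.

Section Idempotents.
Variables (R : comPzRingType) (n : nat) (p1 p2 : 'M[R]_n).
Hypotheses (ip1 : p1 *m p1 = p1) (ip2 : p2 *m p2 = p2).

Lemma idem_sub_cube :
  (p1 - p2) *m (p1 - p2) *m (p1 - p2) =
  (p1 - p2) - (p1 *m p2 *m p1 - p2 *m p1 *m p2).
Proof.
have e1 : (p1 - p2) *m ((p1 - p2) *m p1) = p1 - p1 *m p2 *m p1.
  rewrite [(p1 - p2) *m p1]mulmxBl ip1 mulmxBr !mulmxBl ip1 !mulmxA ip2.
  by rewrite opprB addrA subrK.
have e2 : (p1 - p2) *m ((p1 - p2) *m p2) = p2 - p2 *m p1 *m p2.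
  rewrite [(p1 - p2) *m p2]mulmxBl ip2 mulmxBr !mulmxBl ip2 !mulmxA ip1.
  by rewrite opprB addrC addrA subrK.
rewrite -mulmxA [(p1 - p2) *m (p1 - p2)]mulmxBr mulmxBr e1 e2.
by rewrite opprD opprK addrACA opprD opprK.
Qed.

Lemma mxtrace_idem_sub_sqr :
  \tr ((p1 - p2) *m (p1 - p2)) = \tr p1 + \tr p2 - 2 * \tr (p1 *m p2).
Proof.
rewrite mulmxBl !mulmxBr ip1 ip2 !raddfB /= [\tr (p2 *m p1)]mxtrace_mulC.
by ring.
Qed.

Lemma mxtrace_idem_mul_sub_sqr :
  \tr (p1 *m ((p1 - p2) *m (p1 - p2))) = \tr p1 - \tr (p1 *m p2).
Proof.
rewrite mulmxA [p1 *m _]mulmxBr ip1 mulmxBl !mulmxBr ip1 -(mulmxA p1 p2 p2) ip2.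
rewrite !raddfB /= [\tr (p1 *m p2 *m p1)]mxtrace_mulC mulmxA ip1.
by ring.
Qed.

End Idempotents.

Lemma idem_sub_cube_scaled (F : fieldType) n (p1 p2 : 'M[F]_n) (c : F) :
  p1 *m p1 = p1 -> p2 *m p2 = p2 -> c != 0 ->
  c *: (p1 *m p2 *m p1 - p2 *m p1 *m p2) = p1 - p2 ->
  (p1 - p2) *m (p1 - p2) *m (p1 - p2) = (1 - c^-1) *: (p1 - p2).
Proof.
move=> ip1 ip2 c_neq0 rel; rewrite idem_sub_cube //.
have -> : p1 *m p2 *m p1 - p2 *m p1 *m p2 = c^-1 *: (p1 - p2) by rewrite -rel scalerK.
by rewrite scalerBl scale1r.
Qed.

Lemma idem_compl (R : pzRingType) n (p : 'M[R]_n) :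
  p *m p = p -> (1%:M - p) *m (1%:M - p) = 1%:M - p.
Proof. by move=> ip; rewrite mulmxBl mul1mx mulmxBr mulmx1 ip subrr subr0. Qed.

Section TwoProjections.
Variables (N : nat) (p1 p2 : 'M[algC]_N) (lam : algC).
Hypotheses (hp1 : adjmx p1 = p1) (ip1 : p1 *m p1 = p1).
Hypotheses (hp2 : adjmx p2 = p2) (ip2 : p2 *m p2 = p2).
Hypothesis tr_p12 : \tr p1 = \tr p2.
Hypothesis lam_gt0 : 0 < lam.
Let K := p1 - p2.
Hypothesis K3 : K *m K *m K = lam ^+ 2 *: K.
Let k := eig_mult K lam.

Let hK : adjmx K = K. Proof. by rewrite adjmxB hp1 hp2. Qed.
Let lam_neq0 : lam != 0. Proof. by rewrite gt_eqF. Qed.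

Lemma proj_sub_eig_multN : eig_mult K (- lam) = k.
Proof.
have [trK _] := herm_cubic_traces hK lam_neq0 K3.
apply/eqP; rewrite -(eqr_nat algC) eq_sym -subr_eq0.
move: trK; rewrite raddfB /= tr_p12 subrr => /esym/eqP.
by rewrite mulf_eq0 (negbTE lam_neq0).
Qed.

Let mxtrace_K2 : \tr (K *m K) = lam ^+ 2 * (k + k)%:R.
Proof.
by have [_] := herm_cubic_traces hK lam_neq0 K3; rewrite proj_sub_eig_multN.
Qed.

Lemma proj_sub_mxtrace_mul : \tr (p1 *m p2) = \tr p1 - lam ^+ 2 * k%:R.
Proof.
have two_neq0 : (2 : algC) != 0 by rewrite pnatr_eq0.
apply: (mulfI two_neq0); rewrite mulrBr.
have -> : 2 * (lam ^+ 2 * k%:R) = \tr (K *m K) by rewrite mxtrace_K2 natrD; ring.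
by rewrite mxtrace_idem_sub_sqr // -tr_p12; ring.
Qed.

Let E := 1%:M - lam ^- 2 *: (K *m K).

Let hE : adjmx E = E.
Proof.
have lam_real : lam ^- 2 \is Num.real by rewrite rpredV rpredX // gtr0_real.
by rewrite adjmxB adjmx1 adjmxZ adjmxM hK conj_Creal.
Qed.

Let iE : E *m E = E.
Proof.
apply: idem_compl; rewrite -scalemxAl -scalemxAr scalerA mulmxA K3 -scalemxAl.
by rewrite scalerA mulrAC mulVf ?mul1r // expf_neq0.
Qed.

Let mxtrace_E : \tr E = N%:R - 2 * k%:R.
Proof.
rewrite raddfB /= mxtraceZ mxtrace1 mxtrace_K2 mulrA mulVf ?mul1r ?expf_neq0 //.
by rewrite natrD; ring.
Qed.

Let mxtrace_p1E : \tr (p1 *m E) = \tr p1 - k%:R.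
Proof.
rewrite mulmxBr mulmx1 -scalemxAr raddfB /= mxtraceZ mxtrace_idem_mul_sub_sqr //.
by rewrite proj_sub_mxtrace_mul; field.
Qed.

Lemma proj_sub_eig_mult_le_rank : (k <= \rank p1)%N.
Proof.
have := mxtrace_proj_mul_ge0 hp1 ip1 hE iE.
by rewrite mxtrace_p1E (mxtrace_idem ip1) subr_ge0 ler_nat.
Qed.

Lemma proj_sub_rank_add_eig_mult_le : (\rank p1 + k <= N)%N.
Proof.
have hq1 : adjmx (1%:M - p1) = 1%:M - p1 by rewrite adjmxB adjmx1 hp1.
have := mxtrace_proj_mul_ge0 hq1 (idem_compl ip1) hE iE.
rewrite mulmxBl mul1mx raddfB /= mxtrace_E mxtrace_p1E (mxtrace_idem ip1).
rewrite (_ : _ - _ = N%:R - (\rank p1 + k)%:R); last by rewrite natrD; ring.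
by rewrite subr_ge0 ler_nat.
Qed.

End TwoProjections.

Lemma ptrace_sqr_le n (P : 'M[algC]_(n * n)) : adjmx P = P -> P *m P = P ->
  n%:R * (\tr (ptrace1 P *m ptrace1 P) + \tr (ptrace2 P *m ptrace2 P)) <=
  n%:R ^+ 2 * (\rank P)%:R + (\rank P)%:R ^+ 2.
Proof.
move=> hP iP; set A := ptrace1 P; set B := ptrace2 P.
set r : algC := (\rank P)%:R; set m : algC := n%:R.
have /orP[/eqP m0 | m_gt0] : (m == 0) || (0 < m) by rewrite -le0r ler0n.
  by rewrite m0 mul0r expr0n mul0r add0r exprn_ge0 ?ler0n.
have trP : \tr P = r := mxtrace_idem iP.
have trA : \tr A = r by rewrite mxtrace_ptrace1.
have trB : \tr B = r by rewrite mxtrace_ptrace2.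
have hA : adjmx A = A by rewrite adjmx_ptrace1 hP.
have hB : adjmx B = B by rewrite adjmx_ptrace2 hP.
pose X1 : 'M[algC]_(n * n) := B *t 1%:M; pose X2 : 'M[algC]_(n * n) := 1%:M *t A.
(* [Q] is [n^2] times the part of [P] orthogonal, for the trace form, to
   every [X *t 1%:M] and [1%:M *t Y]. *)
pose Q := m ^+ 2 *: P - m *: X1 - m *: X2 + r *: 1%:M.
have hQ : adjmx Q = Q.
  rewrite /Q /X1 /X2 !(adjmxD, adjmxN, adjmxZ, adjmx_tens) hA hB hP !adjmx1.
  by rewrite rmorphXn !rmorph_nat.
have tPX1 : \tr (P *m X1) = \tr (B *m B) := mxtrace_mul_tensmx1 P B.
have tPX2 : \tr (P *m X2) = \tr (A *m A) := mxtrace_mul_tens1mx P A.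
have tX1X1 : \tr (X1 *m X1) = m * \tr (B *m B).
  by rewrite tensmx_mul mulmx1 mxtrace_tens mxtrace1 mulrC.
have tX2X2 : \tr (X2 *m X2) = m * \tr (A *m A).
  by rewrite tensmx_mul mulmx1 mxtrace_tens mxtrace1.
have tX1X2 : \tr (X1 *m X2) = r ^+ 2.
  by rewrite tensmx_mul mulmx1 mul1mx mxtrace_tens trA trB.
have tX1 : \tr X1 = m * r by rewrite mxtrace_tens trB mxtrace1 mulrC.
have tX2 : \tr X2 = m * r by rewrite mxtrace_tens trA mxtrace1.
have t1 : \tr (1%:M : 'M[algC]_(n * n)) = m ^+ 2 by rewrite mxtrace1 natrM.
have trQQ : \tr (Q *m Q) =
    m ^+ 2 * (m ^+ 2 * r - m * (\tr (A *m A) + \tr (B *m B)) + r ^+ 2).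
  rewrite !(mulmxDl, mulmxDr, mulNmx, mulmxN) -!scalemxAl -!scalemxAr.
  rewrite !(raddfD, raddfN) /= !mxtraceZ !(mulmx1, mul1mx) iP.
  rewrite [\tr (X1 *m P)]mxtrace_mulC [\tr (X2 *m P)]mxtrace_mulC.
  rewrite [\tr (X2 *m X1)]mxtrace_mulC trP tPX1 tPX2 tX1X1 tX2X2 tX1X2 tX1 tX2 t1.
  by ring.
have := herm_mxtrace_sqr_ge0 hQ; rewrite trQQ pmulr_rge0 ?exprn_gt0 // => ge0.
by rewrite -subr_ge0 addrAC.
Qed.

Lemma mxtrace_tens_shift_le n (P : 'M[algC]_(n * n)) : adjmx P = P -> P *m P = P ->
  2 * n%:R * \tr ((P *t 1%:M) *m castmx (mulnA n n n, mulnA n n n) (1%:M *t P)) <=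
  n%:R ^+ 2 * (\rank P)%:R + (\rank P)%:R ^+ 2.
Proof.
move=> hP iP; apply: le_trans (ptrace_sqr_le hP iP).
rewrite mxtrace_tens_shift -mulrA mulrCA ler_wpM2l ?ler0n //.
by rewrite herm_mxtrace_mul_le // ?adjmx_ptrace1 ?adjmx_ptrace2 hP.
Qed.

Section TensorProjection.
Variables (n : nat) (P : 'M[algC]_(n * n)).
Hypotheses (hP : adjmx P = P) (iP : P *m P = P).
Let r := \rank P.
Let P1 : 'M[algC]_(n * n * n) := P *t 1%:M.
Let P2 : 'M[algC]_(n * n * n) := castmx (mulnA n n n, mulnA n n n) (1%:M *t P).

Lemma adjmx_tensmx1 : adjmx P1 = P1.
Proof. by rewrite adjmx_tens hP adjmx1. Qed.

Lemma tensmx1_idem : P1 *m P1 = P1.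
Proof. by rewrite tensmx_mul iP mulmx1. Qed.

Lemma adjmx_tens1mx_cast : adjmx P2 = P2.
Proof. by rewrite adjmx_castmx adjmx_tens hP adjmx1. Qed.

Lemma tens1mx_cast_idem : P2 *m P2 = P2.
Proof. by rewrite castmx_mulmx tensmx_mul iP mulmx1. Qed.

Lemma mxtrace_tensmx1 : \tr P1 = (r * n)%:R.
Proof. by rewrite mxtrace_tens (mxtrace_idem iP) mxtrace1 natrM. Qed.

Lemma mxtrace_tens1mx_cast : \tr P2 = (r * n)%:R.
Proof.
by rewrite mxtrace_castmx mxtrace_tens (mxtrace_idem iP) mxtrace1 mulrC natrM.
Qed.

Lemma rank_tensmx1 : \rank P1 = (r * n)%N.
Proof.
apply/eqP; rewrite -(eqr_nat algC) -mxtrace_idem ?mxtrace_tensmx1 //.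
exact: tensmx1_idem.
Qed.

Lemma tens_shift_rank_bound (k : nat) :
  (r * n)%:R - k%:R <= \tr (P1 *m P2) -> (r * (n ^ 2 - r) <= 2 * n * k)%N.
Proof.
move=> tr_ge.
have bound : 2 * n%:R * ((r * n)%:R - k%:R) <= n%:R ^+ 2 * r%:R + r%:R ^+ 2 :> algC.
  apply: le_trans (mxtrace_tens_shift_le hP iP).
  by rewrite ler_wpM2l ?mulr_ge0 ?ler0n.
rewrite mulnBr leq_subLR -(ler_nat algC) natrD !natrM -subr_ge0.
by rewrite (_ : _ - _ = n%:R ^+ 2 * r%:R + r%:R ^+ 2 - 2 * n%:R * ((r * n)%:R - k%:R))
  ?subr_ge0 // natrM; ring.
Qed.

Lemma tens_shift_fixed : P1 = P2 -> P = 0 \/ P = 1%:M *t 1%:M.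
Proof.
move=> P12; have : (r * (n ^ 2 - r) <= 2 * n * 0)%N.
  by apply: tens_shift_rank_bound; rewrite -P12 tensmx1_idem mxtrace_tensmx1 subr0.
rewrite muln0 leqn0 muln_eq0 subn_eq0 => /orP[r0 | r_full].
  by left; apply/eqP; rewrite -mxrank_eq0.
have P_unit : P \in unitmx.
  by rewrite -row_free_unit /row_free eqn_leq rank_leq_row; rewrite -mulnn in r_full.
by right; rewrite tens1mx1 -[LHS](mulKmx P_unit) iP mulVmx.
Qed.

End TensorProjection.

Theorem proposition2 (n : nat) (Q : algC) (P : 'M[algC]_(n * n)) :
  (2 <= n)%N -> Q \is Num.real -> 0 < Q ->
  adjmx P = P -> P *m P = P ->
  let P1 : 'M[algC]_(n * n * n) := P *t (1%:M : 'M[algC]_n) in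
  let P2 : 'M[algC]_(n * n * n) := castmx (mulnA n n n, mulnA n n n)
             ((1%:M : 'M[algC]_n) *t P) in
  Q ^+ 2 *: (P1 *m P2 *m P1 - P2 *m P1 *m P2) = P1 - P2 ->
  P != 0 -> P != (1%:M : 'M[algC]_n) *t (1%:M : 'M[algC]_n) ->
  let r := \rank P in
  let K := P1 - P2 in
  let lam := sqrtC (1 - Q ^- 2) in
  exists k : nat,
    [/\ eig_mult K lam = k, eig_mult K (- lam) = k,
        (r * (n ^ 2 - r) <= 2 * n * k)%N
      & (k <= minn (r * n) (n ^ 3 - r * n))%N].
Proof.
move=> _ Q_real Q_gt0 hP iP P1 P2 heq P_neq0 P_neq1 r K lam.
have hP1 := adjmx_tensmx1 hP; have iP1 := tensmx1_idem iP.
have hP2 := adjmx_tens1mx_cast hP; have iP2 := tens1mx_cast_idem iP.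
have hK : adjmx K = K by rewrite adjmxB hP1 hP2.
have K3 := idem_sub_cube_scaled iP1 iP2 (expf_neq0 2 (lt0r_neq0 Q_gt0)) heq.
have [mu_gt0 | ] := boolP (0 < 1 - Q ^- 2); last first.
  rewrite -real_leNgt ?real0 ?rpredB ?rpred1 ?rpredV ?rpredX // => mu_le0.
  move/eqP: (herm_cubic_le0 hK K3 mu_le0); rewrite subr_eq0 => /eqP P12.
  by case: (tens_shift_fixed hP iP P12) => P_eq; [move: P_neq0 | move: P_neq1];
    rewrite P_eq eqxx.
have lam_gt0 : 0 < lam by rewrite sqrtC_gt0.
have lam2_le1 : lam ^+ 2 <= 1.
  by rewrite sqrtCK lerBlDr lerDl ltW // invr_gt0 exprn_gt0.
rewrite -[1 - _]sqrtCK -/lam in K3.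
have tr12 : \tr P1 = \tr P2 by rewrite mxtrace_tensmx1 // mxtrace_tens1mx_cast.
have trP12 := proj_sub_mxtrace_mul hP1 iP1 hP2 iP2 tr12 lam_gt0 K3.
have n3 : (n * n * n = n ^ 3)%N by rewrite mulnn -expnSr.
exists (eig_mult K lam); split => //.
- by apply: proj_sub_eig_multN.
- apply: tens_shift_rank_bound => //; rewrite trP12 mxtrace_tensmx1 //.
  by rewrite lerD2l lerN2 ler_piMl ?ler0n.
- rewrite leq_min -(rank_tensmx1 iP) proj_sub_eig_mult_le_rank //= -n3.
  by rewrite leq_subRL ?rank_leq_row //; apply: proj_sub_rank_add_eig_mult_le.
Qed.
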